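(* Let $K$ be a field, let $e_1,\dots,e_m$ be a basis of $K^m$, and let $T_1,\dots,T_k:K^m\to K^n$ be linear maps. Suppose that for every $l$ and every choice of distinct indices $i_1,\dots,i_l\in\{1,\dots,m\}$, the span of the vectors $\{T_j(e_{i_t}): 1\le t\le l,\ 1\le j\le k\}$ has dimension at least $l$. Then there exists a function $\phi:\{1,\dots,m\}\to\{1,\dots,k\}$ such that the vectors $T_{\phi(1)}(e_1),T_{\phi(2)}(e_2),\dots,T_{\phi(m)}(e_m)$ are linearly independent. *)

From HB Require Import structures.
From mathcomp Require Import all_boot all_algebra.
Set Implicit Arguments. Unset Strict Implicit. Unset Printing Implicit Defensive.
Import GRing.Theory.
Local Open Scope ring_scope.

(* Conventions: vectors of K^m are row vectors 'rV[K]_m; a linear map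
   K^m -> K^n is represented by its matrix A : 'M[K]_(m,n), acting by
   v |-> v *m A. *)

Definition is_basis (K : fieldType) (m : nat) (e : 'I_m -> 'rV[K]_m) : bool :=
  row_free (\matrix_(i < m) e i) && row_full (\matrix_(i < m) e i).

Definition span_images (K : fieldType) (m n k : nat)
  (e : 'I_m -> 'rV[K]_m) (T : 'I_k -> 'M[K]_(m, n)) (S : {set 'I_m}) :
  'M[K]_n :=
  (\sum_(i in S) \sum_(j < k) <<e i *m T j>>)%MS.

Definition lin_indep (K : fieldType) (p n : nat) (v : 'I_p -> 'rV[K]_n) : bool :=
  row_free (\matrix_(i < p) v i).

From HB Require Import structures.
From mathcomp Require Import all_boot all_algebra.
From mathcomp Require Import zify.
Set Implicit Arguments. Unset Strict Implicit. Unset Printing Implicit Defensive.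
Import GRing.Theory.
Local Open Scope ring_scope.

(* Rado's shrinking argument. Give every index i a set A i of admissible
   choices; Rado's condition asks that any S of the indices reaches rank at
   least |S| using admissible choices only. If A i0 has two elements x1 and
   x2, deleting one of them from A i0 preserves the condition: otherwise some
   S1 violates the condition after deleting x1 and some S2 after deleting x2,
   with spans P1 and P2. Both contain i0, the span of S1 :|: S2 lies in P1 +
   P2 and that of S1 :&: S2 minus i0 lies in P1 :&: P2, so the dimension
   formula for sum and intersection gives |S1| + |S2| - 1 <= rank P1 + rank
   P2 <= |S1| + |S2| - 2. Shrinking until every A i is a singleton {phi i},
   the condition for the full index set says that the m chosen vectors span a
   space of dimension m. *)

Section Rado.
Variables (K : fieldType) (m n k : nat) (v : 'I_m -> 'I_k -> 'rV[K]_n).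

Implicit Types (A : 'I_m -> {set 'I_k}) (S : {set 'I_m}).

Definition span_choices A S : 'M[K]_n :=
  (\sum_(i in S) \sum_(j in A i) <<v i j>>)%MS.

Definition rado_cond A : Prop := forall S, (#|S| <= \rank (span_choices A S))%N.

Lemma rado_condP A :
  reflect (rado_cond A)
          [forall S : {set 'I_m}, #|S| <= \rank (span_choices A S)]%N.
Proof. exact: forallP. Qed.

Lemma not_rado_cond A :
  ~ rado_cond A -> exists S, (\rank (span_choices A S) < #|S|)%N.
Proof.
by move/rado_condP/forallPn=> [S]; rewrite -ltnNge; exists S.
Qed.

Lemma span_choices_sup A S i j :
  i \in S -> j \in A i -> (v i j <= span_choices A S)%MS.
Proof.
by move=> iS jA; rewrite -genmxE; apply: (sumsmx_sup i) => //; apply: (sumsmx_sup j).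
Qed.

Lemma span_choices_subP A S p (X : 'M[K]_(p, n)) :
  (forall i j, i \in S -> j \in A i -> (v i j <= X)%MS) ->
  (span_choices A S <= X)%MS.
Proof.
move=> sub_vX; apply/sumsmx_subP => i iS; apply/sumsmx_subP => j jA.
by rewrite genmxE; apply: sub_vX.
Qed.

Lemma rado_cond_card_gt0 A i : rado_cond A -> (0 < #|A i|)%N.
Proof.
move=> radoA; rewrite card_gt0; apply/eqP => Ai0.
have span0 : (span_choices A [set i] <= (0 : 'M[K]_n))%MS.
  by apply: span_choices_subP => i' j; rewrite inE => /eqP ->; rewrite Ai0 inE.
by have := radoA [set i]; rewrite cards1 (submx0null span0) mxrank0.
Qed.

Lemma rado_cond_singletons A (phi : 'I_m -> 'I_k) :
  rado_cond A -> (forall i, A i = [set phi i]) ->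
  row_free (\matrix_(i < m) v i (phi i)).
Proof.
move=> radoA A1; rewrite /row_free eqn_leq rank_leq_row /=.
have := radoA setT; rewrite cardsT card_ord => /leq_trans; apply; apply: mxrankS.
apply: span_choices_subP => i j _; rewrite A1 inE => /eqP ->.
by have := row_sub i (\matrix_(i0 < m) v i0 (phi i0)); rewrite rowK.
Qed.

Definition drop_choice A i0 x : 'I_m -> {set 'I_k} :=
  fun i => if i == i0 then A i0 :\ x else A i.

Lemma mem_drop_choice A i0 x i j :
  (j \in drop_choice A i0 x i) = (j \in A i) && ((i != i0) || (j != x)).
Proof.
by rewrite /drop_choice; case: eqVneq => [->|_]; rewrite ?in_setD1 ?andbT // andbC.
Qed.

Lemma sum_card_drop_choice A i0 x : x \in A i0 ->
  (\sum_i #|drop_choice A i0 x i| < \sum_i #|A i|)%N.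
Proof.
move=> xA; rewrite (bigD1 i0) //= [X in (_ < X)%N](bigD1 i0) //= /drop_choice eqxx.
rewrite (eq_bigr (fun i => #|A i|)); last by move=> i /negbTE ->.
by rewrite [X in (_ < X + _)%N](cardsD1 x) xA ltn_add2r.
Qed.

Lemma drop_choice_violation_mem A i0 x S : rado_cond A ->
  (\rank (span_choices (drop_choice A i0 x) S) < #|S|)%N -> i0 \in S.
Proof.
move=> radoA; apply: contraLR => i0S; rewrite -leqNgt.
apply: leq_trans (radoA S) (mxrankS _).
apply: span_choices_subP => i j iS jA; apply: span_choices_sup => //.
by rewrite mem_drop_choice jA; case: eqVneq iS i0S => // -> ->.
Qed.

Section Shrink.
Variables (A : 'I_m -> {set 'I_k}) (i0 : 'I_m) (x1 x2 : 'I_k) (S1 S2 : {set 'I_m}).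
Hypotheses (x12 : x1 != x2) (i0S1 : i0 \in S1) (i0S2 : i0 \in S2).
Let P1 := span_choices (drop_choice A i0 x1) S1.
Let P2 := span_choices (drop_choice A i0 x2) S2.

Lemma span_choices_setU_drop : (span_choices A (S1 :|: S2) <= P1 + P2)%MS.
Proof.
apply: span_choices_subP => i j; rewrite inE => iS12 jA.
have [/andP[/eqP ei /eqP ej]|dropped1] := boolP ((i == i0) && (j == x1)).
  subst i j.
  apply: submx_trans (addsmxSr _ _); apply: span_choices_sup => //.
  by rewrite mem_drop_choice jA x12 orbT.
have [iS1|niS1] := boolP (i \in S1).
  apply: submx_trans (addsmxSl _ _); apply: span_choices_sup => //.
  by rewrite mem_drop_choice jA -negb_and dropped1.
have ni0 : i != i0 by apply: contraNneq niS1 => ->.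
rewrite (negbTE niS1) /= in iS12.
apply: submx_trans (addsmxSr _ _); apply: span_choices_sup => //.
by rewrite mem_drop_choice jA ni0.
Qed.

Lemma span_choices_setI_drop :
  (span_choices A (S1 :&: S2 :\ i0) <= P1 :&: P2)%MS.
Proof.
apply: span_choices_subP => i j; rewrite !inE => /and3P[ni0 iS1 iS2] jA.
by rewrite sub_capmx !span_choices_sup // mem_drop_choice jA ni0.
Qed.

Lemma drop_choice_violations_incompatible : rado_cond A ->
  ~ ((\rank P1 < #|S1|)%N /\ (\rank P2 < #|S2|)%N).
Proof.
move=> radoA [ltP1 ltP2].
have rankU := leq_trans (radoA _) (mxrankS span_choices_setU_drop).
have rankI := leq_trans (radoA _) (mxrankS span_choices_setI_drop).
have card_split : (#|S1 :|: S2| + #|S1 :&: S2 :\ i0|).+1 = (#|S1| + #|S2|)%N.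
  by rewrite -(cardsUI S1 S2) (cardsD1 i0 (S1 :&: S2)) inE i0S1 i0S2 add1n addnS.
have := mxrank_sum_cap P1 P2; lia.
Qed.

End Shrink.

Lemma rado_cond_shrink A i0 : rado_cond A -> (1 < #|A i0|)%N ->
  exists2 x, x \in A i0 & rado_cond (drop_choice A i0 x).
Proof.
move=> radoA /card_gt1P[x1 [x2 [x1A x2A x12]]].
have [rado1|/not_rado_cond[S1 ltS1]] := rado_condP (drop_choice A i0 x1).
  by exists x1.
exists x2 => // S2; rewrite leqNgt; apply/negP => ltS2.
apply: (drop_choice_violations_incompatible x12 _ _ radoA (conj ltS1 ltS2)).
  exact: drop_choice_violation_mem ltS1.
exact: drop_choice_violation_mem ltS2.
Qed.

Theorem rado_cond_transversal A : rado_cond A ->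
  exists phi : 'I_m -> 'I_k,
    (forall i, phi i \in A i) /\ row_free (\matrix_(i < m) v i (phi i)).
Proof.
have [N] := ubnP (\sum_i #|A i|); elim: N A => // N IH A ltAN radoA.
have [/existsP[i0 gt1]|all_le1] := boolP [exists i, 1 < #|A i|]%N.
  have [x xA radoB] := rado_cond_shrink radoA gt1.
  have [|phi [phiB freeB]] := IH _ _ radoB.
    by rewrite -ltnS; apply: leq_trans ltAN; apply: sum_card_drop_choice.
  exists phi; split => // i; have := phiB i.
  by rewrite mem_drop_choice => /andP[].
have /fin_all_exists[phi A1] i : exists j, A i = [set j].
  apply/cards1P; rewrite eqn_leq rado_cond_card_gt0 // andbT leqNgt.
  by apply: contra all_le1 => gt1; apply/existsP; exists i.
exists phi; split; last exact: rado_cond_singletons radoA A1.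
by move=> i; rewrite A1 set11.
Qed.

End Rado.

Theorem lemma5 (K : fieldType) (m n k : nat)
  (e : 'I_m -> 'rV[K]_m) (T : 'I_k -> 'M[K]_(m, n))
  (he : is_basis e)
  (hT : forall S : {set 'I_m}, (#|S| <= \rank (span_images e T S))%N) :
  exists phi : 'I_m -> 'I_k, lin_indep (fun i : 'I_m => e i *m T (phi i)).
Proof.
pose v i j := e i *m T j.
have span_imagesE S : span_images e T S = span_choices v (fun=> setT) S.
  by apply: eq_bigr => i _; apply: eq_bigl => j; rewrite in_setT.
have radoT : rado_cond v (fun=> setT) by move=> S; rewrite -span_imagesE.
have [phi [_ free_phi]] := rado_cond_transversal radoT.
by exists phi.
Qed.
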